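(* Let $n\geq 1$ and $0\leq k\leq n-1$. There is a bijection between the set of Catalan paths $P$ of order $n$ with $\mathrm{valley}(P)=k$ and the set of Catalan paths $Q$ of order $n$ with $\mathrm{enor}(Q)=k$.
   Context: A Catalan path of order $n$ is a word $P=p_1p_2\cdots p_{2n}$ in the steps $\mathbf N=(0,1)$ and $\mathbf E=(1,0)$ with $n$ of each, describing a lattice path from $(0,0)$ to $(n,n)$ that never goes below the line $y=x$. $\mathrm{valley}(P)$ is the number of indices $i$ with $p_i=\mathbf E$ and $p_{i+1}=\mathbf N$. $\mathrm{enor}(P)$ is the number of indices $i\in\{1,\dots,n\}$ with $p_{2i}=\mathbf N$. *)

From mathcomp Require Import all_boot.
Set Implicit Arguments. Unset Strict Implicit. Unset Printing Implicit Defensive.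

(* A step is encoded as a bool: N = (0,1) is [true], E = (1,0) is [false]. *)
Definition stepN : bool := true.
Definition stepE : bool := false.

Definition word (n : nat) := (n.*2).-tuple bool.

(* 1-indexed letter p_i of the word (i in 1..2n). *)
Definition letter (p : seq bool) (i : nat) : bool := nth stepE p i.-1.

Definition nN (s : seq bool) : nat := count (fun b => b == stepN) s.
Definition nE (s : seq bool) : nat := count (fun b => b == stepE) s.

(* Catalan path of order n: n N's and n E's, and the path from (0,0)
   never goes below y = x, i.e. every prefix has #E <= #N. *)
Definition catalan (n : nat) (p : word n) : bool :=
  [&& nN p == n, nE p == n &
      [forall i : 'I_(n.*2).+1, nE (take i p) <= nN (take i p)]].

Definition valley (n : nat) (p : word n) : nat :=
  \sum_(1 <= i < n.*2) ((letter p i == stepE) && (letter p i.+1 == stepN)).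

Definition enor (n : nat) (p : word n) : nat :=
  \sum_(1 <= i < n.+1) (letter p i.*2 == stepN).

Definition catalan_valley (n k : nat) :=
  {p : word n | catalan p && (valley p == k)}.
Definition catalan_enor (n k : nat) :=
  {p : word n | catalan p && (enor p == k)}.

(* Catalan paths of order n are the Dyck words [dyck t] of the binary trees t with
   n nodes, where dyck (Node l r) = N (dyck l) E (dyck r).  In these terms
   valley (Node l r) = valley l + peak r and peak (Node l r) = 1 + valley l + peak r,
   while, since every Dyck word has even length, the N's at even positions satisfy
   enor (Node l r) = odd l + enor r and odd (Node l r) = 1 + enor l + odd r, where
   odd counts the N's at odd positions.  Matching these recursions gives a pair of
   mutually recursive size-preserving bijections psi, chi on trees with
   valley (psi t) = enor t and peak (chi t) = odd t. *)

From mathcomp Require Import all_boot.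
From mathcomp Require Import zify.

Set Implicit Arguments.
Unset Strict Implicit.
Unset Printing Implicit Defensive.

Inductive btree := Leaf | Node of btree & btree.

Fixpoint bsize t := if t is Node l r then (bsize l + bsize r).+1 else 0.

Fixpoint dyck t := if t is Node l r then true :: dyck l ++ false :: dyck r else [::].

Lemma size_dyck t : size (dyck t) = (bsize t).*2.
Proof. by elim: t => //= l IHl r IHr; rewrite size_cat /= IHl IHr; lia. Qed.

Fixpoint parse fuel (s : seq bool) : btree * seq bool :=
  if fuel is fuel'.+1 then
    if s is true :: s1 then
      let (l, s2) := parse fuel' s1 in
      if s2 is false :: s3 then let (r, s4) := parse fuel' s3 in (Node l r, s4)
      else (Leaf, s)
    else (Leaf, s)
  else (Leaf, s).

Definition tree_of_dyck s := (parse (size s) s).1.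

Lemma parse_dyck fuel t r :
  ~~ head false r -> size (dyck t) <= fuel -> parse fuel (dyck t ++ r) = (t, r).
Proof.
elim: t fuel r => [|l IHl rt IHr] [|fuel] r Hr //=; first by case: r Hr => [|[]].
rewrite size_cat /= ltnS => Hs.
by rewrite -catA IHl /= ?IHr //; lia.
Qed.

Lemma dyckK : cancel dyck tree_of_dyck.
Proof. by move=> t; rewrite /tree_of_dyck -[dyck t]cats0 parse_dyck ?cats0. Qed.

Fixpoint dyck_from (h : nat) (s : seq bool) :=
  if s is b :: s' then (if b then dyck_from h.+1 s' else (0 < h) && dyck_from h.-1 s')
  else h == 0.

Lemma dyck_fromP h s :
  dyck_from h s <-> h + nN s = nE s /\ forall i, nE (take i s) <= h + nN (take i s).
Proof.
elim: s h => [|[] s IH] h /=.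
- by split=> [/eqP -> // | [Hh _]]; apply/eqP; lia.
- rewrite IH; split=> -[Hend Hpre]; split; try lia.
  + by case=> [|i] //=; have := Hpre i; lia.
  + by move=> i; have := Hpre i.+1; rewrite /=; lia.
- split=> [/andP[Hh /IH[Hend Hpre]] | [Hend Hpre]].
    by split; [lia | case=> [|i] //=; have := Hpre i; lia].
  have := Hpre 1; rewrite /= take0 /= => Hh.
  apply/andP; split; first lia.
  by apply/IH; split=> [|i]; [lia | have := Hpre i.+1; rewrite /=; lia].
Qed.

Lemma dyck_from_cat h t r : dyck_from h (dyck t ++ r) = dyck_from h r.
Proof. by elim: t h r => //= l IHl rt IHr h r; rewrite -catA IHl /= IHr. Qed.

(* The first-return decomposition, generalised to paths starting at any height. *)
Lemma dyck_from_split h s : dyck_from h s ->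
  exists t r, [/\ s = dyck t ++ r, dyck_from h r & ~~ head false r].
Proof.
move: {2}(size s) (leqnn (size s)) => m; elim: m s h => [|m IH] s h.
  by case: s => // _ Hh; exists Leaf, [::].
case: s => [|[] s] /= Hs Hh; [by exists Leaf, [::] | | by exists Leaf, (false :: s)].
have [l [s1 [Es Hs1 Hhead]]] := IH s h.+1 Hs Hh.
case: s1 Es Hs1 Hhead => [|[] s1] //= Es Hs1 _.
have [r [s2 [Es1 Hs2 Hhead]]] : exists r s2,
    [/\ s1 = dyck r ++ s2, dyck_from h s2 & ~~ head false s2].
  by apply: IH Hs1; move: Hs; rewrite Es size_cat /=; lia.
by exists (Node l r), s2; split => //=; rewrite Es Es1 -catA.
Qed.

Lemma tree_of_dyckK s : dyck_from 0 s -> dyck (tree_of_dyck s) = s.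
Proof.
case/dyck_from_split => t [[|[] r] [-> Hr _]] //.
by rewrite cats0 dyckK.
Qed.

Lemma catalan_dyck_from n (p : word n) : catalan p <-> dyck_from 0 p.
Proof.
have Hsize : nN p + nE p = size p.
  rewrite -(count_predC (fun b => b == stepN) p).
  by congr (_ + _); apply: eq_count => -[].
rewrite size_tuple in Hsize; rewrite dyck_fromP /catalan.
split=> [/and3P[/eqP HN /eqP HE /forallP Hpre] | [Hend Hpre]].
  split=> [|i]; first lia.
  case: (leqP i n.*2) => Hi; first exact: (Hpre (Ordinal (n := n.*2.+1) Hi)).
  by rewrite take_oversize ?size_tuple; lia.
by apply/and3P; split; [apply/eqP; lia | apply/eqP; lia | apply/forallP].
Qed.

Fixpoint valleys (prev : bool) (s : seq bool) :=
  if s is b :: s' then (~~ prev && b) + valleys b s' else 0.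

(* [nN_alt true s] counts the N's at the odd (1-indexed) positions of s,
   [nN_alt false s] those at the even positions. *)
Fixpoint nN_alt (par : bool) (s : seq bool) :=
  if s is b :: s' then (par && b) + nN_alt (~~ par) s' else 0.

Lemma valleys_cat prev s1 s2 :
  valleys prev (s1 ++ s2) = valleys prev s1 + valleys (last prev s1) s2.
Proof. by elim: s1 prev => //= b s1 IH prev; rewrite IH addnA. Qed.

Lemma nN_alt_cat par s1 s2 :
  nN_alt par (s1 ++ s2) = nN_alt par s1 + nN_alt (par (+) odd (size s1)) s2.
Proof.
elim: s1 par => [|b s1 IH] par /=; first by rewrite addbF.
by rewrite IH addnA; case: par; case: (odd _).
Qed.

Lemma valleys_sum prev s : valleys prev s = (~~ prev && nth false s 0) +
  \sum_(0 <= j < (size s).-1) (~~ nth false s j && nth false s j.+1).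
Proof.
elim: s prev => [|b s IH] prev /=; first by rewrite big_geq // andbF.
rewrite IH; congr (_ + _).
by case: s {IH} => [|c s] /=; [rewrite !big_geq // andbF | rewrite big_nat_recl].
Qed.

Lemma nN_alt_sum s :
  nN_alt false s = \sum_(0 <= j < (size s)./2) nth false s j.*2.+1 /\
  nN_alt true s = \sum_(0 <= j < (size s).+1./2) nth false s j.*2.
Proof.
elim: s => [|b s [IHf IHt]] /=; first by rewrite !big_geq.
by split; [rewrite IHt | rewrite IHf big_nat_recl].
Qed.

Lemma valley_valleys n (p : word n) : valley p = valleys true p.
Proof.
rewrite valleys_sum size_tuple /valley big_add1 /=.
by apply: eq_bigr => j _; rewrite /letter /=; case: (nth _ _ _); case: (nth _ _ _).
Qed.

Lemma enor_nN_alt n (p : word n) : enor p = nN_alt false p.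
Proof.
rewrite (proj1 (nN_alt_sum _)) size_tuple half_double /enor big_add1 /=.
by apply: eq_bigr => j _; rewrite /letter doubleS /=; case: (nth _ _ _).
Qed.

Fixpoint psi t := if t is Node l r then Node (psi r) (chi l) else Leaf
with chi t := if t is Node l r then Node (psi l) (chi r) else Leaf.

Fixpoint psi_inv t := if t is Node a b then Node (chi_inv b) (psi_inv a) else Leaf
with chi_inv t := if t is Node a b then Node (psi_inv a) (chi_inv b) else Leaf.

Lemma psi_chiK t : psi_inv (psi t) = t /\ chi_inv (chi t) = t.
Proof. by elim: t => //= l [Epl Ecl] r [Epr Ecr]; rewrite Ecl Epr ?Epl ?Ecr. Qed.

Lemma psi_chi_invK t : psi (psi_inv t) = t /\ chi (chi_inv t) = t.
Proof. by elim: t => //= l [Epl Ecl] r [Epr Ecr]; rewrite Epl Ecr ?Ecl ?Epr. Qed.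

Lemma psiK : cancel psi psi_inv.
Proof. by move=> t; case: (psi_chiK t). Qed.

Lemma psi_invK : cancel psi_inv psi.
Proof. by move=> t; case: (psi_chi_invK t). Qed.

Lemma bsize_psi_chi t : bsize (psi t) = bsize t /\ bsize (chi t) = bsize t.
Proof. by elim: t => //= l [-> ->] r [-> ->]; rewrite addnC. Qed.

Lemma bsize_psi t : bsize (psi t) = bsize t.
Proof. by case: (bsize_psi_chi t). Qed.

(* [valleys false] counts the peaks of a Dyck word, so chi sends the N's at odd
   positions to peaks. *)
Lemma valleys_psi_chi t :
  valleys true (dyck (psi t)) = nN_alt false (dyck t) /\
  valleys false (dyck (chi t)) = nN_alt true (dyck t).
Proof.
elim: t => //= l [IHpl IHcl] r [IHpr IHcr].
rewrite !valleys_cat !nN_alt_cat !size_dyck !odd_double /= !andbF.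
by rewrite IHpl IHcl IHpr IHcr; split; lia.
Qed.

Lemma valleys_psi t : valleys true (dyck (psi t)) = nN_alt false (dyck t).
Proof. by case: (valleys_psi_chi t). Qed.

Section WordOfTree.

Variable n : nat.

Definition word_of_tree t : word n := insubd (nseq_tuple n.*2 false) (dyck t).

Lemma word_of_treeE t : bsize t = n -> val (word_of_tree t) = dyck t.
Proof. by move=> Ht; rewrite /word_of_tree insubdK // unfold_in size_dyck Ht. Qed.

Lemma catalan_word_of_tree t : bsize t = n -> catalan (word_of_tree t).
Proof.
by move=> Ht; apply/catalan_dyck_from; rewrite word_of_treeE // -[dyck t]cats0 dyck_from_cat.
Qed.

Lemma word_of_treeK t : bsize t = n -> tree_of_dyck (word_of_tree t) = t.
Proof. by move=> Ht; rewrite word_of_treeE // dyckK. Qed.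

Lemma tree_of_wordP (p : word n) : catalan p ->
  bsize (tree_of_dyck p) = n /\ word_of_tree (tree_of_dyck p) = p.
Proof.
move/catalan_dyck_from/tree_of_dyckK => Ep.
have Hsize : bsize (tree_of_dyck p) = n.
  by apply: double_inj; rewrite -size_dyck Ep size_tuple.
by split=> //; apply: val_inj; rewrite word_of_treeE.
Qed.

Variables (P Q : pred (word n)) (g g' : btree -> btree).
Hypotheses (gK : cancel g g') (g'K : cancel g' g).
Hypothesis bsize_g : forall t, bsize (g t) = bsize t.
Hypothesis PQ : forall t, bsize t = n -> P (word_of_tree (g t)) = Q (word_of_tree t).

Lemma catalan_transport :
  exists f : {p : word n | catalan p && P p} -> {p : word n | catalan p && Q p},
    bijective f.
Proof.
have bsize_g' t : bsize (g' t) = bsize t by rewrite -{2}(g'K t) bsize_g.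
pose f (p : word n) := word_of_tree (g' (tree_of_dyck p)).
pose f' (p : word n) := word_of_tree (g (tree_of_dyck p)).
have fP p : catalan p && P p -> catalan (f p) && Q (f p).
  case/andP=> Cp Pp; have [Hp Ep] := tree_of_wordP Cp.
  by rewrite /f catalan_word_of_tree ?bsize_g' // -PQ ?bsize_g' // g'K Ep.
have f'P p : catalan p && Q p -> catalan (f' p) && P (f' p).
  case/andP=> Cp Qp; have [Hp Ep] := tree_of_wordP Cp.
  by rewrite /f' catalan_word_of_tree ?bsize_g // PQ // Ep.
exists (fun x => exist (fun p => catalan p && Q p) _ (fP _ (valP x))).
exists (fun y => exist (fun p => catalan p && P p) _ (f'P _ (valP y))).
- case=> p Hp; apply: val_inj => /=; have /andP[Cp _] := Hp.
  have [Htp Ep] := tree_of_wordP Cp.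
  by rewrite /f' /f word_of_treeK ?bsize_g' // g'K.
- case=> p Hp; apply: val_inj => /=; have /andP[Cp _] := Hp.
  have [Htp Ep] := tree_of_wordP Cp.
  by rewrite /f' /f word_of_treeK ?bsize_g // gK.
Qed.

End WordOfTree.

Theorem lemma4p2 (n k : nat) :
  1 <= n -> k <= n - 1 ->
  exists f : catalan_valley n k -> catalan_enor n k, bijective f.
Proof.
move=> _ _.
apply: (catalan_transport psiK psi_invK bsize_psi) => t Ht.
by rewrite valley_valleys enor_nN_alt !word_of_treeE ?bsize_psi // valleys_psi.
Qed.
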